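(* Let $S=\{R_0,\dots,R_d\}$ be a quasi-thin scheme on $X$, $\mathbb F$ a field, $x\in X$, $\mathcal T=\mathcal T(x)$, $E_a^*=E_a^*(x)$, and fix a total order $\preceq$ on $X$. Let $\mathcal U=\{(g,h):k_g=k_h=|R_{g'}R_h|=2\}\cup\{(g,h):(g,h)\text{ is a bad pair of }S\}$. For $(i,j)\in\mathcal U$ write $xR_i=\{u_1,u_2\}$, $xR_j=\{v_1,v_2\}$ with $u_1\prec u_2$, $v_1\prec v_2$, and set $B_{ij}=E_{u_1v_1}+E_{u_2v_2}$. Then $$\mathcal B=\{B_{ij}:(i,j)\in\mathcal U\}\cup\{E_y^*JE_z^*:R_y,R_z\in S\}$$ is an $\mathbb F$-basis of $\mathcal T$.
   Context: Let $X$ be a nonempty finite set. A scheme of class $d$ on $X$ is a partition $S=\{R_0,\dots,R_d\}$ of $X\times X$ into nonempty sets such that $R_0=\{(b,b):b\in X\}$; for each $c$ there is $c'$ with $R_{c'}=\{(f,e):(e,f)\in R_c\}$; and for all $i,j,k$ the intersection number $p_{ij}^k=|\{\ell\in X:(m,\ell)\in R_i,(\ell,n)\in R_j\}|$ does not depend on $(m,n)\in R_k$. The valency is $k_a=p_{aa'}^0$; quasi-thin means all $k_a\le 2$. Complex product: $R_aR_b=\{R_c:p_{ab}^c>0\}$. For $y\in X$, $yR_a=\{z:(y,z)\in R_a\}$. $A_a\in M_X(\mathbb F)$ is the $(0,1)$ adjacency matrix of $R_a$, $E_a^*(y)$ is the diagonal $(0,1)$-matrix with ones exactly at positions indexed by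 $yR_a$, $E_{uv}$ is the matrix unit at $(u,v)$, $J$ is the all-ones matrix. The Terwilliger $\mathbb F$-algebra $\mathcal T(y)$ is the $\mathbb F$-subalgebra of $M_X(\mathbb F)$ generated by $A_0,\dots,A_d,E_0^*(y),\dots,E_d^*(y)$. Bad pair: $(u,v)$ is a bad pair of $S$ if there exist an integer $a\ge1$ and $R_{i_b},R_{j_b},R_{\ell_b}\in S$ ($b=0,\dots,a$) with $i_0=u$, $\ell_a=v$, $k_{i_b}=k_{\ell_b}=2$ and $p_{i_bj_b}^{\ell_b}=1$ for all $b$, $\ell_c=i_{c+1}$ for $0\le c\le a-1$, and $|R_{u'}R_v|=1$. (For $(i,j)\in\mathcal U$ one has $k_i=k_j=2$.) *)

From HB Require Import structures.
From mathcomp Require Import all_boot all_order all_algebra.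
From mathcomp Require Import boolp.
Set Implicit Arguments. Unset Strict Implicit. Unset Printing Implicit Defensive.
Import GRing.Theory.
Local Open Scope ring_scope.

(* The finite set X is 'I_n; a partition of X x X into d+1 classes R_0..R_d
   is given by the "class function" r : X -> X -> 'I_d.+1 ((u,v) \in R_(r u v)). *)
Section Scheme.
Variables (n d : nat) (r : 'I_n -> 'I_n -> 'I_d.+1).

Definition is_scheme : Prop :=
  [/\ (forall c : 'I_d.+1, exists u v, r u v = c),
      (forall u v, (r u v == ord0) = (u == v)),
      (forall c : 'I_d.+1, exists c' : 'I_d.+1,
          forall e f, (r f e == c') = (r e f == c)) &
      (forall (i j k : 'I_d.+1) (m1 n1 m2 n2 : 'I_n),
          r m1 n1 = k -> r m2 n2 = k ->
          #|[set l | (r m1 l == i) && (r l n1 == j)]| =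
          #|[set l | (r m2 l == i) && (r l n2 == j)]|)].               (* p_ij^k well defined *)

Definition pnum (i j k : 'I_d.+1) : nat :=
  if [pick mn : 'I_n * 'I_n | r mn.1 mn.2 == k] is Some mn then
    #|[set l | (r mn.1 l == i) && (r l mn.2 == j)]|
  else 0%N.

Definition ctr (c : 'I_d.+1) : 'I_d.+1 :=
  if [pick mn : 'I_n * 'I_n | r mn.1 mn.2 == c] is Some mn then r mn.2 mn.1 else c.

Definition valency (a : 'I_d.+1) : nat := pnum a (ctr a) ord0.

Definition quasi_thin : Prop := forall a, (valency a <= 2)%N.

Definition cplx_card (a b : 'I_d.+1) : nat := #|[set c | (0 < pnum a b c)%N]|.

Definition bad_pair (u v : 'I_d.+1) : Prop :=
  exists (a : nat) (i j l : nat -> 'I_d.+1),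
    [/\ (1 <= a)%N, i 0%N = u & l a = v] /\
    [/\
        (forall b, (b <= a)%N ->
           [/\ valency (i b) = 2%N, valency (l b) = 2%N & pnum (i b) (j b) (l b) = 1%N]),
        (forall c, (c < a)%N -> l c = i c.+1) &
        cplx_card (ctr u) v = 1%N].

Definition inU (g h : 'I_d.+1) : Prop :=
  (valency g = 2%N /\ valency h = 2%N /\ cplx_card (ctr g) h = 2%N) \/ bad_pair g h.

Definition Uset : {set 'I_d.+1 * 'I_d.+1} := [set gh | `[< inU gh.1 gh.2 >]].

Variable F : fieldType.

Definition adjA (a : 'I_d.+1) : 'M[F]_n := \matrix_(u, v) (r u v == a)%:R.

Definition Estar (y : 'I_n) (a : 'I_d.+1) : 'M[F]_n :=
  \matrix_(u, v) ((u == v) && (r y u == a))%:R.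

Definition Jmx : 'M[F]_n := const_mx 1.

(* membership in the Terwilliger algebra T(y): the smallest F-subalgebra
   (subspace containing 1 and closed under product) containing all A_a, E_a^*(y) *)
Definition in_terwilliger (y : 'I_n) (M : 'M[F]_n) : Prop :=
  forall V : {vspace 'M[F]_n},
    (1%:M \in V) ->
    (forall a, adjA a \in V) -> (forall a, Estar y a \in V) ->
    (forall P Q, P \in V -> Q \in V -> P *m Q \in V) ->
    M \in V.

Definition total_order (le : rel 'I_n) : Prop :=
  [/\ reflexive le, antisymmetric le, transitive le & total le].

Definition nbrs_sorted (le : rel 'I_n) (y : 'I_n) (a : 'I_d.+1) : seq 'I_n :=
  sort le (enum [set u | r y u == a]).

Definition Bmx (le : rel 'I_n) (y : 'I_n) (i j : 'I_d.+1) : 'M[F]_n :=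
  let su := nbrs_sorted le y i in let sv := nbrs_sorted le y j in
  delta_mx (nth y su 0) (nth y sv 0) + delta_mx (nth y su 1) (nth y sv 1).

Definition Bfamily (le : rel 'I_n) (y : 'I_n) : seq 'M[F]_n :=
  [seq Bmx le y ij.1 ij.2 | ij <- enum Uset] ++
  [seq Estar y yz.1 *m Jmx *m Estar y yz.2 | yz <- enum [set: 'I_d.+1 * 'I_d.+1]].

Definition is_basis_of_terwilliger (y : 'I_n) (B : seq 'M[F]_n) : Prop :=
  [/\ (forall M, M \in B -> in_terwilliger y M),
      free B &
      (forall M, in_terwilliger y M -> M \in <<B>>%VS)].

End Scheme.

From HB Require Import structures.
From mathcomp Require Import all_boot all_order all_algebra.
From mathcomp Require Import boolp zify ring.
Set Implicit Arguments. Unset Strict Implicit. Unset Printing Implicit Defensive.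
Import GRing.Theory.
Local Open Scope ring_scope.

(* If xR_g = {a, a'} and xR_h = {b, b'}, counting intersection numbers along the rows
   and columns of the block gives r(a',b') = r(a,b) and r(a',b) = r(a,b').  Hence
   E*_g A_c E*_h is a combination of the two pairings E_ab + E_a'b' and E_ab' + E_a'b,
   which sum to E*_g J E*_h, and it is a multiple of E*_g J E*_h when a cell is a
   singleton; if r(a,b) != r(a,b') then |R_g' R_h| = 2, so (g, h) lies in U.  So span B
   contains the generators of T, and it is closed under products since
   B_ij B_jl = B_il and U is transitive (chains of steps with p = 1 concatenate).
   Conversely, along a chain for (i, j) in U the products of the E*_i A_j E*_l are
   pairings of xR_i with xR_j inside T, and such a pairing is B_ij or
   E*_i J E*_j - B_ij.  Independence is witnessed by entry functionals. *)

Lemma big_set2 (R : Type) (idx : R) (op : Monoid.com_law idx) (T : finType)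
    (a b : T) (f : T -> R) :
  a != b -> \big[op/idx]_(u in [set a; b]) f u = op (f a) (f b).
Proof. by move=> ab; rewrite big_setU1 ?inE // big_set1. Qed.

Lemma card_set_pred (T : finType) (A : {set T}) (P : pred T) :
  #|[set u in A | P u]| = (\sum_(u in A) P u)%N.
Proof.
rewrite -sum1_card (eq_bigl (fun u => (u \in A) && P u)) => [|u]; last by rewrite inE.
by rewrite big_mkcondr; apply: eq_bigr => u _; case: (P u).
Qed.

Lemma set2_eq (T : finType) (a a' c c' : T) : a != a' -> [set a; a'] = [set c; c'] ->
  (c = a /\ c' = a') \/ (c = a' /\ c' = a).
Proof.
move=> aa' E.
have cc' : c != c' by move: (cards2 a a') (cards2 c c'); rewrite E aa' => ->; case: (c != c').
have /[!inE] c_in : c \in [set a; a'] by rewrite E !inE eqxx.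
have /[!inE] c'_in : c' \in [set a; a'] by rewrite E !inE eqxx orbT.
by move: cc'; case/orP: c_in => /eqP->; case/orP: c'_in => /eqP->; rewrite ?eqxx; auto.
Qed.

Section MatrixFacts.
Variables (R : nzRingType) (m : nat).

Lemma delta_mulmxE (s t u v : 'I_m) (A : 'M[R]_m) :
  (delta_mx s t *m A) u v = (u == s)%:R * A t v.
Proof.
rewrite mxE (bigD1 t) //= big1 ?addr0 => [|w ne_wt]; rewrite mxE ?eqxx ?andbT //.
by rewrite (negbTE ne_wt) andbF mul0r.
Qed.

Lemma mulmx_deltaE (s t u v : 'I_m) (A : 'M[R]_m) :
  (A *m delta_mx s t) u v = A u s * (v == t)%:R.
Proof.
rewrite mxE (bigD1 s) //= big1 ?addr0 => [|w ne_ws]; rewrite mxE ?eqxx //.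
by rewrite (negbTE ne_ws) mulr0.
Qed.

Lemma mul_delta_mx_delta (i j k l : 'I_m) (A : 'M[R]_m) :
  delta_mx i j *m A *m delta_mx k l = A j k *: delta_mx i l.
Proof.
apply/matrixP => u v; rewrite mulmx_deltaE delta_mulmxE !mxE.
by case: (u == i); case: (v == l); rewrite ?mul0r ?mulr0 ?mul1r ?mulr1.
Qed.

Lemma mxtrace_delta_mull (i j : 'I_m) (A : 'M[R]_m) : \tr (delta_mx i j *m A) = A j i.
Proof.
rewrite /mxtrace (bigD1 i) //= big1 ?addr0 => [|k ne_ki]; rewrite mxE.
- rewrite (bigD1 j) //= big1 ?addr0 => [|l ne_lj]; rewrite mxE ?eqxx ?mul1r //.
  by rewrite (negbTE ne_lj) andbF mul0r.
- by rewrite big1 // => l _; rewrite mxE (negbTE ne_ki) mul0r.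
Qed.

Lemma mul_const1_mx_const1 (D : 'M[R]_m) :
  const_mx 1 *m D *m const_mx 1 = (\sum_u \sum_v D u v) *: (const_mx 1 : 'M[R]_m).
Proof.
apply/matrixP => u v; rewrite !mxE mulr1 exchange_big /=; apply: eq_bigr => w _.
by rewrite !mxE mulr1; apply: eq_bigr => w' _; rewrite mxE mul1r.
Qed.

Definition matching (S T : {set 'I_m}) (M : 'M[R]_m) : Prop :=
  exists a a' b b', [/\ a != a', b != b', S = [set a; a'], T = [set b; b'] &
    M = delta_mx a b + delta_mx a' b'].

Lemma matchingP S T M a a' : matching S T M -> a != a' -> S = [set a; a'] ->
  exists b b', [/\ b != b', T = [set b; b'] & M = delta_mx a b + delta_mx a' b'].
Proof.
case=> [c [c' [b [b' [cc' bb' -> -> ->]]]]] aa' /(set2_eq cc')[[-> ->] | [-> ->]].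
- by exists b, b'.
- by exists b', b; rewrite eq_sym setUC addrC.
Qed.

Lemma matching_mul S T U M M' : matching S T M -> matching T U M' -> matching S U (M *m M').
Proof.
move=> [a [a' [b [b' [aa' bb' -> -> ->]]]]] /matchingP/(_ bb' erefl)[c [c' [cc' -> ->]]].
exists a, a', c, c'; split => //.
by rewrite mulmxDl !mulmxDr !mul_delta_mx !mul_delta_mx_0 ?addr0 ?add0r // eq_sym.
Qed.

End MatrixFacts.

Lemma span_mulmx_closed (K : fieldType) m (X : seq 'M[K]_m) :
  {in X &, forall P Q, P *m Q \in <<X>>%VS} ->
  {in <<X>>%VS &, forall P Q, P *m Q \in <<X>>%VS}.
Proof.
move=> X_mul P Q /(coord_span (X := in_tuple X))-> /(coord_span (X := in_tuple X))->.
rewrite mulmx_suml; apply: memv_suml => i _.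
rewrite -scalemxAl mulmx_sumr; apply: memvZ; apply: memv_suml => j _.
by rewrite -scalemxAr; apply/memvZ/X_mul; apply: mem_nth; rewrite ltn_ord.
Qed.

Lemma free_biorthogonal (K : fieldType) m (I : eqType) (s : seq I) (f W : I -> 'M[K]_m) :
  uniq s -> {in s &, forall i j, \tr (W i *m f j) = (i == j)%:R} -> free [seq f i | i <- s].
Proof.
move=> s_uniq dual; change (free (in_tuple [seq f i | i <- s])); apply/freeP => k sum0 t.
have st : (t < size s)%N by rewrite -(size_map f).
have /hasP[i0 _ _] : has predT s by rewrite has_predT; apply: leq_ltn_trans st.
have := congr1 (fun M => \tr (W (nth i0 s t) *m M)) sum0.
rewrite /= mulmx0 mxtrace0 mulmx_sumr raddf_sum (bigD1 t) //= big1 ?addr0 => [|u ne_ut].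
- by rewrite -scalemxAr mxtraceZ (nth_map i0) // dual ?mem_nth // eqxx mulr1.
- have su : (u < size s)%N by rewrite -(size_map f).
  rewrite -scalemxAr mxtraceZ (nth_map i0) // dual ?mem_nth // nth_uniq // eq_sym.
  by rewrite (negbTE (ne_ut : (u : nat) != t)) mulr0.
Qed.

Section SchemeCombinatorics.
Variables (n d : nat) (r : 'I_n -> 'I_n -> 'I_d.+1).
Hypothesis r_scheme : is_scheme r.

Lemma ctrP c u v : (r v u == ctr r c) = (r u v == c).
Proof.
case: r_scheme => r_onto _ r_tr _; rewrite /ctr.
case: pickP => [[m m'] /= /eqP rmm' | no_pair].
- have [c' r_c'] := r_tr c.
  by have -> : r m' m = c' by apply/eqP; rewrite r_c' rmm'.
- have [u0 [v0 ruv0]] := r_onto c.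
  by move: (no_pair (u0, v0)); rewrite /= ruv0 eqxx.
Qed.

Lemma pnumE i j k m m' : r m m' = k ->
  pnum r i j k = #|[set l | (r m l == i) && (r l m' == j)]|.
Proof.
case: r_scheme => _ _ _ r_reg rmm'; rewrite /pnum.
case: pickP => [[m1 m2] /= /eqP r12 | no_pair].
- exact: r_reg r12 rmm'.
- by move: (no_pair (m, m')); rewrite /= rmm' eqxx.
Qed.

Lemma r_eq0 u v : (r u v == ord0) = (u == v).
Proof. by case: r_scheme. Qed.

Lemma exists_point : exists x : 'I_n, True.
Proof. by case: r_scheme => r_onto _ _ _; have [x [_ _]] := r_onto ord0; exists x. Qed.

Section BasePoint.
Variable x : 'I_n.

Definition nbhd (a : 'I_d.+1) : {set 'I_n} := [set u | r x u == a].

Lemma pnum_nbhd i j k z : r x z = k -> pnum r i j k = #|[set w in nbhd i | r w z == j]|.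
Proof. by move=> /pnumE ->; apply: eq_card => w; rewrite !inE. Qed.

Lemma valency_nbhd a : valency r a = #|nbhd a|.
Proof.
have rxx : r x x = ord0 by apply/eqP; rewrite r_eq0.
by rewrite /valency (pnumE _ _ rxx); apply: eq_card => u; rewrite !inE ctrP andbb.
Qed.

Lemma card_nbhd_gt0 a : (0 < #|nbhd a|)%N.
Proof.
case: r_scheme => r_onto _ _ _; have [u [v ruv]] := r_onto a.
have ruu : r u u = ord0 by apply/eqP; rewrite r_eq0.
rewrite -valency_nbhd /valency (pnumE _ _ ruu).
by apply/card_gt0P; exists v; rewrite !inE ctrP ruv eqxx.
Qed.

Lemma card_nbhd_row g h c w w' : w \in nbhd g -> w' \in nbhd g ->
  #|[set z in nbhd h | r w z == c]| = #|[set z in nbhd h | r w' z == c]|.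
Proof.
case: r_scheme => _ _ _ r_reg; rewrite !inE => w_g w'_g.
have rwx : r w x = ctr r g by apply/eqP; rewrite ctrP.
have rw'x : r w' x = ctr r g by apply/eqP; rewrite ctrP.
have row u : [set l | (r u l == c) && (r l x == ctr r h)] = [set z in nbhd h | r u z == c].
  by apply/setP => z; rewrite !inE ctrP andbC.
by rewrite -!row; apply: r_reg rwx rw'x.
Qed.

Lemma card_nbhd_col g h c z z' : z \in nbhd h -> z' \in nbhd h ->
  #|[set w in nbhd g | r w z == c]| = #|[set w in nbhd g | r w z' == c]|.
Proof.
by rewrite !inE => /eqP rxz /eqP rxz'; rewrite -(pnum_nbhd _ _ rxz) -(pnum_nbhd _ _ rxz').
Qed.

Lemma block2_sym g h a a' b b' : a != a' -> b != b' ->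
  nbhd g = [set a; a'] -> nbhd h = [set b; b'] -> r a' b' = r a b /\ r a' b = r a b'.
Proof.
move=> aa' bb' Ng Nh.
have in2 (A : {set 'I_n}) u u' : A = [set u; u'] -> u \in A /\ u' \in A.
  by move=> ->; rewrite !inE !eqxx orbT.
have [[a_g a'_g] [b_h b'_h]] := (in2 _ _ _ Ng, in2 _ _ _ Nh).
have col c : ((r a b == c) + (r a' b == c) = (r a b' == c) + (r a' b' == c))%N.
  by have := card_nbhd_col g c b_h b'_h; rewrite Ng !card_set_pred !big_set2.
have row c : ((r a b == c) + (r a b' == c) = (r a' b == c) + (r a' b' == c))%N.
  by have := card_nbhd_row h c a_g a'_g; rewrite Nh !card_set_pred !big_set2.
have E1 : r a' b' = r a b.
  move: (col (r a b)) (row (r a b)); rewrite eqxx.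
  by case: (r a' b' == r a b) / eqP => // _; case: (r a' b == r a b); case: (r a b' == r a b).
split=> //; move: (col (r a b')) (row (r a b')); rewrite eqxx E1.
by case: (r a' b == r a b') / eqP => // _; case: (r a b == r a b').
Qed.

Lemma block1l_const g h a b v : nbhd g = [set a] -> b \in nbhd h -> v \in nbhd h ->
  r a v = r a b.
Proof.
move=> Ng b_h v_h; have := card_nbhd_col g (r a b) v_h b_h.
by rewrite Ng !card_set_pred !big_set1 eqxx; case: eqP.
Qed.

Lemma block1r_const g h a b u : nbhd h = [set b] -> a \in nbhd g -> u \in nbhd g ->
  r u b = r a b.
Proof.
move=> Nh a_g u_g; have := card_nbhd_row h (r a b) u_g a_g.
by rewrite Nh !card_set_pred !big_set1 eqxx; case: eqP.
Qed.

Lemma cplx_card_nbhd g h :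
  cplx_card r (ctr r g) h = #|[set r w z | w in nbhd g, z in nbhd h]|.
Proof.
case: r_scheme => r_onto _ _ r_reg; apply: eq_card => c; rewrite !inE.
apply/idP/imset2P.
- have [u [v ruv]] := r_onto c.
  rewrite (pnumE _ _ ruv) card_gt0 => /set0Pn[l]; rewrite inE ctrP => /andP[/eqP rlu rlv].
  have [w0 w0_g] : exists w0, w0 \in nbhd g by apply/set0Pn; rewrite -card_gt0 card_nbhd_gt0.
  have rxw0 : r x w0 = g by apply/eqP; rewrite inE in w0_g.
  have : (0 < #|[set z | (r x z == h) && (r z w0 == ctr r c)]|)%N.
    rewrite -(r_reg _ _ _ _ _ _ _ rlu rxw0); apply/card_gt0P.
    by exists v; rewrite inE rlv ctrP ruv eqxx.
  case/card_gt0P => z; rewrite inE ctrP => /andP[z_h /eqP rw0z].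
  by apply: (@Imset2spec _ _ _ _ _ _ _ w0 z) => //; rewrite ?inE ?rw0z.
- case=> w z w_g z_h ->; rewrite (pnumE _ _ (erefl (r w z))).
  by apply/card_gt0P; exists x; rewrite inE ctrP; rewrite !inE in w_g z_h; rewrite w_g z_h.
Qed.

Lemma cplx_card_block2 g h a a' b b' : a != a' -> b != b' ->
  nbhd g = [set a; a'] -> nbhd h = [set b; b'] ->
  cplx_card r (ctr r g) h = (r a b != r a b').+1.
Proof.
move=> aa' bb' Ng Nh; have [E1 E2] := block2_sym aa' bb' Ng Nh.
rewrite cplx_card_nbhd -cards2; congr #|pred_of_set _|; apply/setP => c; rewrite Ng Nh !inE.
apply/imset2P/orP.
- by case=> w z + + ->; rewrite !inE => /orP[]/eqP-> /orP[]/eqP->; rewrite ?E1 ?E2 eqxx; auto.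
- case=> /eqP->; first by apply: (@Imset2spec _ _ _ _ _ _ _ a b); rewrite ?inE ?eqxx.
  by apply: (@Imset2spec _ _ _ _ _ _ _ a b'); rewrite ?inE ?eqxx ?orbT.
Qed.

Lemma nbhd_valency2 a : valency r a = 2%N ->
  exists a0 a1, a0 != a1 /\ nbhd a = [set a0; a1].
Proof. by rewrite valency_nbhd => /eqP/cards2P. Qed.

Lemma pnum_block2 g h c a a' b b' : a != a' -> b != b' ->
  nbhd g = [set a; a'] -> nbhd h = [set b; b'] ->
  pnum r g c h = ((r a b == c) + (r a b' == c))%N.
Proof.
move=> aa' bb' Ng Nh; have [_ E2] := block2_sym aa' bb' Ng Nh.
have : b \in nbhd h by rewrite Nh !inE eqxx.
by rewrite inE => /eqP/pnum_nbhd->; rewrite Ng card_set_pred big_set2 // E2.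
Qed.

End BasePoint.

Definition chain (u v : 'I_d.+1) (a : nat) : Prop :=
  exists i j l : nat -> 'I_d.+1,
  [/\ i 0%N = u, l a = v,
      (forall b, (b <= a)%N ->
         [/\ valency r (i b) = 2%N, valency r (l b) = 2%N & pnum r (i b) (j b) (l b) = 1%N]) &
      (forall c, (c < a)%N -> l c = i c.+1)].

Lemma chain_cat u v w a1 a2 : chain u v a1 -> chain v w a2 -> chain u w (a1 + a2).+1.
Proof.
case=> i1 [j1 [l1 [i1_0 l1_a step1 link1]]] [i2 [j2 [l2 [i2_0 l2_a step2 link2]]]].
pose glue (f1 f2 : nat -> 'I_d.+1) b := if (b <= a1)%N then f1 b else f2 (b - a1.+1)%N.
exists (glue i1 i2), (glue j1 j2), (glue l1 l2); split; rewrite /glue //=.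
- by rewrite ltnNge leq_addr /= subSS addKn.
- move=> b le_b; case: ifP => [|/negbT]; first exact: step1.
  by rewrite -ltnNge => lt_b; apply: step2; lia.
- move=> c lt_c; case: (ltngtP c a1) => [lt_ca | gt_ca | ->].
  + exact: link1.
  + by rewrite subSS link2; [congr i2; lia | lia].
  + by rewrite subnn l1_a i2_0.
Qed.

Lemma inU_valency2 g h : inU r g h -> valency r g = 2%N /\ valency r h = 2%N.
Proof.
case=> [[vg [vh _]] | [a [i [j [l [[_ <- <-] [step _ _]]]]]]] //.
by have [[vi _ _] [_ vl _]] := (step 0%N (leq0n a), step a (leqnn a)).
Qed.

Lemma inU_chain g h : inU r g h -> exists a, chain g h a.
Proof.
case=> [[vg [vh cplx_gh]] | [a [i [j [l [[_ i_0 l_a] [step link _]]]]]]]; last first.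
  by exists a, i, j, l.
have [x _] := exists_point.
have [a0 [a1 [a01 Ng]]] := nbhd_valency2 x vg; have [b0 [b1 [b01 Nh]]] := nbhd_valency2 x vh.
have diff : r a0 b0 != r a0 b1.
  by move: cplx_gh; rewrite (cplx_card_block2 a01 b01 Ng Nh); case: eqP.
exists 0%N, (fun _ => g), (fun _ => r a0 b0), (fun _ => h); split => // b _; split => //.
by rewrite (pnum_block2 _ a01 b01 Ng Nh) eqxx eq_sym (negbTE diff).
Qed.

Lemma inU_trans g h k : inU r g h -> inU r h k -> inU r g k.
Proof.
move=> Ugh Uhk; have [vg _] := inU_valency2 Ugh; have [_ vk] := inU_valency2 Uhk.
have [a1 c1] := inU_chain Ugh; have [a2 c2] := inU_chain Uhk.
have [i [j [l [i_0 l_a step link]]]] := chain_cat c1 c2.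
have [x _] := exists_point.
have [a0 [a0' [aa' Ng]]] := nbhd_valency2 x vg; have [b0 [b0' [bb' Nk]]] := nbhd_valency2 x vk.
have := cplx_card_block2 aa' bb' Ng Nk; case: eqP => [_ cplx1 | _ cplx2].
- by right; exists (a1 + a2).+1, i, j, l.
- by left.
Qed.

Lemma inU_refl a : valency r a = 2%N -> inU r a a.
Proof.
move=> va; left; split=> //; split=> //.
have [x _] := exists_point; have [a0 [a1 [a01 Na]]] := nbhd_valency2 x va.
rewrite (cplx_card_block2 a01 a01 Na Na).
have -> : r a0 a0 = ord0 by apply/eqP; rewrite r_eq0.
by rewrite eq_sym r_eq0 a01.
Qed.

End SchemeCombinatorics.

Section TerwilligerAlgebra.
Variables (n d : nat) (r : 'I_n -> 'I_n -> 'I_d.+1).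
Hypotheses (r_scheme : is_scheme r) (r_qthin : quasi_thin r).
Variables (F : fieldType) (x : 'I_n) (le : rel 'I_n).

Local Notation nbhd := (nbhd r x).
Local Notation Es := (Estar r F x).
Local Notation J := (Jmx n F).
Local Notation EJE g h := (Es g *m J *m Es h).
Local Notation EAE g c h := (Es g *m adjA r F c *m Es h).
Local Notation BB := (Bmx r F le x).

Definition pt (a : 'I_d.+1) (k : nat) : 'I_n := nth x (nbrs_sorted r le x a) k.

Lemma valency_cases a : valency r a = 1%N \/ valency r a = 2%N.
Proof.
move: (r_qthin a) (card_nbhd_gt0 r_scheme x a); rewrite -(valency_nbhd r_scheme).
by case: valency => [|[|[|]]] //; auto.
Qed.

Lemma nbrs_sorted_perm a : perm_eq (nbrs_sorted r le x a) (enum (nbhd a)).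
Proof. by rewrite /nbrs_sorted perm_sort. Qed.

Lemma r_pt a k : (k < #|nbhd a|)%N -> r x (pt a k) = a.
Proof.
move=> lt_k; have : pt a k \in nbrs_sorted r le x a.
  by apply: mem_nth; rewrite (perm_size (nbrs_sorted_perm a)) -cardE.
by rewrite (perm_mem (nbrs_sorted_perm a)) mem_enum inE => /eqP.
Qed.

Lemma nbhd_pt2 a : valency r a = 2%N ->
  [/\ pt a 0 != pt a 1, nbhd a = [set pt a 0; pt a 1], r x (pt a 0) = a & r x (pt a 1) = a].
Proof.
rewrite (valency_nbhd r_scheme x) => Na2; rewrite !r_pt ?Na2 //.
have s_perm := nbrs_sorted_perm a; have := perm_uniq s_perm; have := perm_size s_perm.
have mem_s := perm_mem s_perm; rewrite -cardE Na2 enum_uniq /pt.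
case: (nbrs_sorted r le x a) mem_s => [|s0 [|s1 [|? ?]]] //= mem_s _; rewrite inE andbT => s01.
by split=> //; apply/setP => u; rewrite -mem_enum -mem_s !inE.
Qed.

Lemma nbhd_pt1 a : valency r a = 1%N -> nbhd a = [set pt a 0].
Proof.
rewrite (valency_nbhd r_scheme x) => Na1.
have s_perm := nbrs_sorted_perm a; have := perm_size s_perm.
have mem_s := perm_mem s_perm; rewrite -cardE Na1 /pt.
case: (nbrs_sorted r le x a) mem_s => [|s0 [|? ?]] //= mem_s _.
by apply/setP => u; rewrite -mem_enum -mem_s !inE.
Qed.

Lemma Estar_mulmxE a (M : 'M[F]_n) u v : (Es a *m M) u v = (r x u == a)%:R * M u v.
Proof.
rewrite mxE (bigD1 u) //= big1 ?addr0 => [|w ne_wu]; rewrite mxE ?eqxx //.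
by rewrite eq_sym (negbTE ne_wu) mul0r.
Qed.

Lemma mulmx_EstarE a (M : 'M[F]_n) u v : (M *m Es a) u v = M u v * (r x v == a)%:R.
Proof.
rewrite mxE (bigD1 v) //= big1 ?addr0 => [|w ne_wv]; rewrite mxE ?eqxx //.
by rewrite (negbTE ne_wv) mulr0.
Qed.

Lemma EJE_E g h u v : EJE g h u v = (r x u == g)%:R * (r x v == h)%:R.
Proof. by rewrite mulmx_EstarE Estar_mulmxE mxE mulr1. Qed.

Lemma indicator_nbhd2 u a p p' : p != p' -> nbhd a = [set p; p'] ->
  ((r x u == a)%:R : F) = (u == p)%:R + (u == p')%:R.
Proof.
move=> pp' /setP/(_ u); rewrite !inE => ->.
by case: (eqVneq u p) => [->|_]; rewrite ?(negbTE pp') ?addr0 ?add0r.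
Qed.

Lemma sum_Estar : \sum_a Es a = 1%:M.
Proof.
apply/matrixP => u v; rewrite summxE (bigD1 (r x u)) //= big1 ?addr0 => [|a ne_a].
  by rewrite !mxE eqxx andbT.
by rewrite /Estar mxE (eq_sym (r x u)) (negbTE ne_a) andbF.
Qed.

Lemma sum_adjA : \sum_c adjA r F c = J.
Proof.
apply/matrixP => u v; rewrite summxE (bigD1 (r u v)) //= big1 ?addr0 => [|c ne_c].
  by rewrite !mxE eqxx.
by rewrite mxE (eq_sym (r u v)) (negbTE ne_c).
Qed.

Lemma Estar_sum_delta a : Es a = \sum_(u in nbhd a) delta_mx u u.
Proof.
have -> : Es a = diag_mx (\row_u (r x u == a)%:R).
  by apply/matrixP => u v; rewrite !mxE; case: (u == v); rewrite ?mulr1n ?mulr0n.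
rewrite diag_mx_sum_delta [RHS]big_mkcond /=; apply: eq_bigr => u _.
by rewrite mxE inE; case: (r x u == a); rewrite ?scale1r ?scale0r.
Qed.

Lemma Estar_block g h (M : 'M[F]_n) :
  Es g *m M *m Es h = \sum_(u in nbhd g) \sum_(v in nbhd h) M u v *: delta_mx u v.
Proof.
rewrite !Estar_sum_delta !mulmx_suml; apply: eq_bigr => u _.
by rewrite mulmx_sumr; apply: eq_bigr => v _; rewrite mul_delta_mx_delta.
Qed.

Lemma EJE_block2 g h a a' b b' : a != a' -> b != b' ->
  nbhd g = [set a; a'] -> nbhd h = [set b; b'] ->
  EJE g h = delta_mx a b + delta_mx a b' + (delta_mx a' b + delta_mx a' b').
Proof. by move=> aa' bb' Ng Nh; rewrite Estar_block Ng Nh !big_set2 // !mxE !scale1r. Qed.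

Lemma EAE_block2 g c h a a' b b' : a != a' -> b != b' ->
  nbhd g = [set a; a'] -> nbhd h = [set b; b'] ->
  EAE g c h = (r a b == c)%:R *: (delta_mx a b + delta_mx a' b') +
              (r a b' == c)%:R *: (delta_mx a b' + delta_mx a' b).
Proof.
move=> aa' bb' Ng Nh; have [E1 E2] := block2_sym r_scheme aa' bb' Ng Nh.
rewrite Estar_block Ng Nh !big_set2 // !mxE E1 E2 !scalerDr.
by rewrite /= [in RHS]addrACA [X in _ + X = _]addrC.
Qed.

Lemma EAE_block1l g c h a b : nbhd g = [set a] -> b \in nbhd h ->
  EAE g c h = (r a b == c)%:R *: EJE g h.
Proof.
move=> Ng b_h; rewrite !Estar_block Ng !big_set1 scaler_sumr; apply: eq_bigr => v v_h.
by rewrite !mxE scale1r (block1l_const r_scheme Ng b_h v_h).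
Qed.

Lemma EAE_block1r g c h a b : nbhd h = [set b] -> a \in nbhd g ->
  EAE g c h = (r a b == c)%:R *: EJE g h.
Proof.
move=> Nh a_g; rewrite !Estar_block Nh scaler_sumr; apply: eq_bigr => u u_g.
by rewrite !big_set1 !mxE scale1r (block1r_const r_scheme Nh a_g u_g).
Qed.

Lemma Estar_valency1 a : valency r a = 1%N -> Es a = EJE a a.
Proof.
by move=> /nbhd_pt1 Na; rewrite Estar_block Estar_sum_delta Na !big_set1 mxE scale1r.
Qed.

Lemma Estar_valency2 a : valency r a = 2%N -> Es a = BB a a.
Proof. by case/nbhd_pt2 => p01 Na _ _; rewrite Estar_sum_delta Na big_set2. Qed.

Lemma Bmx_delta i j : BB i j = delta_mx (pt i 0) (pt j 0) + delta_mx (pt i 1) (pt j 1).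
Proof. by []. Qed.

Lemma Bmx_mul i j k l : valency r j = 2%N -> valency r k = 2%N ->
  BB i j *m BB k l = if j == k then BB i l else 0.
Proof.
case/nbhd_pt2 => q01 _ rq0 rq1 /nbhd_pt2[_ _ rk0 rk1]; rewrite !Bmx_delta.
case: (eqVneq j k) => [<- | ne_jk].
- by rewrite mulmxDl !mulmxDr !mul_delta_mx !mul_delta_mx_0 ?addr0 ?add0r // eq_sym.
- have ne p q : r x p = j -> r x q = k -> p != q.
    by move=> rp rq; apply: contraNneq ne_jk => pq; rewrite -rp -rq pq.
  by rewrite mulmxDl !mulmxDr !mul_delta_mx_0 ?ne ?addr0.
Qed.

Lemma Bmx_mul_EJE i j c e : valency r i = 2%N -> valency r j = 2%N ->
  BB i j *m EJE c e = (j == c)%:R *: EJE i e.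
Proof.
case/nbhd_pt2 => p01 Ni _ _ /nbhd_pt2[_ _ rq0 rq1]; apply/matrixP => u v.
rewrite Bmx_delta mulmxDl [LHS]mxE !delta_mulmxE [RHS]mxE !EJE_E rq0 rq1.
by rewrite (indicator_nbhd2 u p01 Ni); ring.
Qed.

Lemma EJE_mul_Bmx c e i j : valency r i = 2%N -> valency r j = 2%N ->
  EJE c e *m BB i j = (e == i)%:R *: EJE c j.
Proof.
case/nbhd_pt2 => _ _ rp0 rp1 /nbhd_pt2[q01 Nj _ _]; apply/matrixP => u v.
rewrite Bmx_delta mulmxDr [LHS]mxE !mulmx_deltaE [RHS]mxE !EJE_E rp0 rp1 (eq_sym e).
by rewrite (indicator_nbhd2 v q01 Nj); ring.
Qed.

Lemma EJE_mul a b c e : EJE a b *m EJE c e = (\sum_u \sum_v (Es b *m Es c) u v) *: EJE a e.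
Proof.
have -> : EJE a b *m EJE c e = Es a *m (J *m (Es b *m Es c) *m J) *m Es e by rewrite !mulmxA.
by rewrite /Jmx mul_const1_mx_const1 -scalemxAr -scalemxAl.
Qed.

Lemma pt_pairings_matching g h : valency r g = 2%N -> valency r h = 2%N ->
  matching (nbhd g) (nbhd h)
    (delta_mx (pt g 0) (pt h 0) + delta_mx (pt g 1) (pt h 1) : 'M[F]_n) /\
  matching (nbhd g) (nbhd h)
    (delta_mx (pt g 0) (pt h 1) + delta_mx (pt g 1) (pt h 0) : 'M[F]_n).
Proof.
case/nbhd_pt2 => p01 Ng _ _ /nbhd_pt2[q01 Nh _ _]; split.
  by exists (pt g 0), (pt g 1), (pt h 0), (pt h 1).
exists (pt g 0), (pt g 1), (pt h 1), (pt h 0); split=> //; first by rewrite eq_sym.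
by rewrite Nh setUC.
Qed.

Lemma EAE_matching i c l : valency r i = 2%N -> valency r l = 2%N -> pnum r i c l = 1%N ->
  matching (nbhd i) (nbhd l) (EAE i c l).
Proof.
move=> vi vl; have [match1 match2] := pt_pairings_matching vi vl.
have [p01 Ni _ _] := nbhd_pt2 vi; have [q01 Nl _ _] := nbhd_pt2 vl.
rewrite (pnum_block2 r_scheme c p01 q01 Ni Nl) (EAE_block2 c p01 q01 Ni Nl).
by case: (r _ _ == c); case: (r _ _ == c) => //= _; rewrite scale1r scale0r ?addr0 ?add0r.
Qed.

Lemma matching_Bmx g h M : valency r g = 2%N -> valency r h = 2%N ->
  matching (nbhd g) (nbhd h) M -> M = BB g h \/ M = EJE g h - BB g h.
Proof.
case/nbhd_pt2 => p01 Ng _ _ /nbhd_pt2[q01 Nh _ _] /matchingP/(_ p01 Ng)[b [b' [bb' Nh' ->]]].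
rewrite Bmx_delta (EJE_block2 p01 q01 Ng Nh).
case: (set2_eq q01 (etrans (esym Nh) Nh')) => [[-> ->] | [-> ->]]; [by left | right].
apply/esym/eqP; rewrite subr_eq; apply/eqP.
by rewrite [RHS]addrACA (addrC (delta_mx (pt g 0) (pt h 1))).
Qed.

Definition terwilliger_closed (V : {vspace 'M[F]_n}) : Prop :=
  [/\ 1%:M \in V, forall c, adjA r F c \in V, forall a, Es a \in V &
      forall P Q, P \in V -> Q \in V -> P *m Q \in V].

Section ClosedSubspace.
Variable V : {vspace 'M[F]_n}.
Hypothesis V_closed : terwilliger_closed V.

Lemma Jmx_closed : J \in V.
Proof. by case: V_closed => _ VA _ _; rewrite -sum_adjA; apply: memv_suml. Qed.

Lemma EJE_closed g h : EJE g h \in V.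
Proof. by case: V_closed => _ _ VE Vmul; rewrite !Vmul ?Jmx_closed. Qed.

Lemma EAE_closed g c h : EAE g c h \in V.
Proof. by case: V_closed => _ VA VE Vmul; rewrite !Vmul. Qed.

Lemma chain_matching_closed g h a : chain r g h a ->
  exists2 M, M \in V & matching (nbhd g) (nbhd h) M.
Proof.
case=> i [j [l [<- <- step link]]].
elim: a step link => [|a IHa] step link.
  have [vi vl p1] := step 0%N (leqnn 0).
  by exists (EAE (i 0%N) (j 0%N) (l 0%N)); [exact: EAE_closed | exact: EAE_matching].
have [M VM matchM] :=
  IHa (fun b le_b => step b (leqW le_b)) (fun c lt_c => link c (ltnW lt_c)).
have [vi vl p1] := step a.+1 (leqnn _); exists (M *m EAE (i a.+1) (j a.+1) (l a.+1)).
  by case: V_closed => _ _ _ ->; rewrite ?EAE_closed.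
by apply: matching_mul matchM _; rewrite link //; apply: EAE_matching.
Qed.

Lemma Bmx_closed i j : inU r i j -> BB i j \in V.
Proof.
move=> Uij; have [vi vj] := inU_valency2 Uij.
have [a /chain_matching_closed[M VM matchM]] := inU_chain r_scheme Uij.
case: (matching_Bmx vi vj matchM) => [<- // | EM].
have -> : BB i j = EJE i j - M by rewrite EM opprB addrC subrK.
by rewrite memvB ?EJE_closed.
Qed.

End ClosedSubspace.

Local Notation B := (Bfamily r F le x).

Lemma Bfamily_memP P : P \in B ->
  (exists i j, inU r i j /\ P = BB i j) \/ (exists a b, P = EJE a b).
Proof.
rewrite mem_cat => /orP[/mapP[[i j] Uij ->] | /mapP[[a b] _ ->]]; last by right; exists a, b.
by left; exists i, j; rewrite mem_enum inE in Uij; split => //; apply/asboolP.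
Qed.

Lemma Bmx_in_span i j : inU r i j -> BB i j \in <<B>>%VS.
Proof.
move=> Uij; apply/memv_span; rewrite mem_cat; apply/orP; left.
by apply/mapP; exists (i, j); rewrite // mem_enum inE; apply/asboolP.
Qed.

Lemma EJE_in_span a b : EJE a b \in <<B>>%VS.
Proof.
apply/memv_span; rewrite mem_cat; apply/orP; right.
by apply/mapP; exists (a, b); rewrite ?mem_enum ?in_setT.
Qed.

Lemma matching_in_span g h M : inU r g h -> matching (nbhd g) (nbhd h) M -> M \in <<B>>%VS.
Proof.
move=> Ugh matchM; have [vg vh] := inU_valency2 Ugh.
by case: (matching_Bmx vg vh matchM) => ->; rewrite ?memvB ?EJE_in_span // Bmx_in_span.
Qed.

Lemma Estar_in_span a : Es a \in <<B>>%VS.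
Proof.
case: (valency_cases a) => va; first by rewrite Estar_valency1 ?EJE_in_span.
by rewrite Estar_valency2 //; apply/Bmx_in_span/(inU_refl r_scheme).
Qed.

Lemma EAE_in_span g c h : EAE g c h \in <<B>>%VS.
Proof.
have pt0_in a : pt a 0 \in nbhd a by rewrite inE r_pt ?card_nbhd_gt0.
case: (valency_cases g) => [/nbhd_pt1 Ng | vg].
  by rewrite (EAE_block1l c Ng (pt0_in h)) memvZ ?EJE_in_span.
case: (valency_cases h) => [/nbhd_pt1 Nh | vh].
  by rewrite (EAE_block1r c Nh (pt0_in g)) memvZ ?EJE_in_span.
have [p01 Ng _ _] := nbhd_pt2 vg; have [q01 Nh _ _] := nbhd_pt2 vh.
rewrite (EAE_block2 c p01 q01 Ng Nh).
case: (eqVneq (r (pt g 0) (pt h 0)) (r (pt g 0) (pt h 1))) => [-> | ne].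
  rewrite -scalerDr memvZ // addrACA [X in _ + X]addrC.
  by rewrite -(EJE_block2 p01 q01 Ng Nh) EJE_in_span.
have Ugh : inU r g h by left; rewrite (cplx_card_block2 r_scheme p01 q01 Ng Nh) ne.
have [match1 match2] := pt_pairings_matching vg vh.
by rewrite memvD ?memvZ ?(matching_in_span Ugh match1) ?(matching_in_span Ugh match2).
Qed.

Lemma span_Bfamily_closed : terwilliger_closed <<B>>%VS.
Proof.
split; [| move=> c | exact: Estar_in_span |].
- by rewrite -sum_Estar; apply: memv_suml => a _; apply: Estar_in_span.
- have -> : adjA r F c = 1%:M *m adjA r F c *m 1%:M by rewrite mul1mx mulmx1.
  rewrite -sum_Estar !mulmx_suml; apply: memv_suml => g _.
  by rewrite mulmx_sumr; apply: memv_suml => h _; apply: EAE_in_span.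
- apply: span_mulmx_closed => P Q.
  move=> /Bfamily_memP[[i [j [Uij ->]]] | [a [b ->]]];
    move=> /Bfamily_memP[[k [l [Ukl ->]]] | [c [e ->]]].
  + have [[_ vj] [vk _]] := (inU_valency2 Uij, inU_valency2 Ukl).
    rewrite Bmx_mul //; case: eqP => [jk | _]; last exact: mem0v.
    by apply/Bmx_in_span/(inU_trans r_scheme Uij); rewrite jk.
  + by have [vi vj] := inU_valency2 Uij; rewrite Bmx_mul_EJE // memvZ ?EJE_in_span.
  + by have [vk vl] := inU_valency2 Ukl; rewrite EJE_mul_Bmx // memvZ ?EJE_in_span.
  + by rewrite EJE_mul memvZ ?EJE_in_span.
Qed.

Lemma Bmx_E i j u v : BB i j u v =
  ((u == pt i 0) && (v == pt j 0))%:R + ((u == pt i 1) && (v == pt j 1))%:R.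
Proof. by rewrite Bmx_delta !mxE. Qed.

Lemma Bmx_out k l u v : valency r k = 2%N -> valency r l = 2%N ->
  (r x u != k) || (r x v != l) -> BB k l u v = 0.
Proof.
case/nbhd_pt2 => _ _ rk0 rk1 /nbhd_pt2[_ _ rl0 rl1] out.
have off p q : r x p = k -> r x q = l -> (u == p) && (v == q) = false.
  by move=> rp rq; apply: contraTF out => /andP[/eqP-> /eqP->]; rewrite rp rq !eqxx.
by rewrite Bmx_E !off ?addr0.
Qed.

Local Notation label := (('I_d.+1 * 'I_d.+1) + ('I_d.+1 * 'I_d.+1))%type.

Definition Blabels : seq label :=
  [seq inl ij | ij <- enum (Uset r)] ++ [seq inr ab | ab <- enum [set: 'I_d.+1 * 'I_d.+1]].

Definition Bmember (t : label) : 'M[F]_n :=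
  match t with inl ij => BB ij.1 ij.2 | inr ab => EJE ab.1 ab.2 end.

(* E*_a J E*_b is read at (first point of xR_a, last point of xR_b), where B_ab vanishes. *)
Definition Btest (t : label) : 'M[F]_n :=
  match t with
  | inl (i, j) => delta_mx (pt j 0) (pt i 0) - delta_mx (pt j 1) (pt i 0)
  | inr (a, b) => delta_mx (pt b #|nbhd b|.-1) (pt a 0)
  end.

Lemma Bfamily_labels : B = [seq Bmember t | t <- Blabels].
Proof. by rewrite map_cat -!map_comp. Qed.

Lemma Blabels_uniq : uniq Blabels.
Proof.
rewrite cat_uniq !map_inj_uniq ?enum_uniq ?andbT; try by move=> ? ? [].
by apply/hasPn => _ /mapP[ab _ ->]; apply/mapP => -[].
Qed.

Lemma Blabels_inU i j : inl (i, j) \in Blabels -> inU r i j.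
Proof.
rewrite mem_cat => /orP[/mapP[[i' j'] + [-> ->]] | /mapP[_ _ //]].
by rewrite mem_enum inE => /asboolP.
Qed.

Lemma Btest_dual : {in Blabels &, forall t t', \tr (Btest t *m Bmember t') = (t == t')%:R}.
Proof.
have r_pt0 a : r x (pt a 0) = a by rewrite r_pt ?card_nbhd_gt0.
have r_last b : r x (pt b #|nbhd b|.-1) = b by rewrite r_pt // prednK ?card_nbhd_gt0.
move=> [[i j] | [a b]] [[k l] | [c e]] /=.
- move=> /Blabels_inU/inU_valency2[vi vj] /Blabels_inU/inU_valency2[vk vl].
  rewrite mulmxBl raddfB /= !mxtrace_delta_mull.
  case: (eqVneq (i, j) (k, l)) => [[<- <-] | ne].
    have [p01 _ _ _] := nbhd_pt2 vi; have [q01 _ _ _] := nbhd_pt2 vj.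
    by rewrite eqxx !Bmx_E !eqxx (negbTE p01) (eq_sym (pt j 1)) (negbTE q01) /= !addr0 subr0.
  have -> : (inl (i, j) == inl (k, l) :> label) = false by exact: negbTE ne.
  have [_ _ rq0 rq1] := nbhd_pt2 vj.
  by rewrite !Bmx_out ?subr0 // r_pt0 ?rq0 ?rq1 -negb_and -xpair_eqE.
- move=> /Blabels_inU/inU_valency2[_ /nbhd_pt2[_ _ rq0 rq1]] _.
  by rewrite mulmxBl raddfB /= !mxtrace_delta_mull !EJE_E rq0 rq1 subrr.
- move=> _ /Blabels_inU/inU_valency2[vk vl]; rewrite mxtrace_delta_mull.
  case: (eqVneq (a, b) (k, l)) => [[-> ->] | ne].
    have [p01 _ _ _] := nbhd_pt2 vk; have [q01 _ _ _] := nbhd_pt2 vl.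
    rewrite -(valency_nbhd r_scheme) vl Bmx_E eqxx (negbTE p01) /=.
    by rewrite eq_sym (negbTE q01) addr0.
  by rewrite Bmx_out ?r_pt0 ?r_last //; move: ne; rewrite xpair_eqE negb_and.
- by move=> _ _; rewrite mxtrace_delta_mull EJE_E r_pt0 r_last -natrM mulnb.
Qed.

Lemma free_Bfamily : free B.
Proof. by rewrite Bfamily_labels; apply: free_biorthogonal Blabels_uniq Btest_dual. Qed.

End TerwilligerAlgebra.

Theorem corollary4p6 (n d : nat) (r : 'I_n -> 'I_n -> 'I_d.+1) (F : fieldType)
  (x : 'I_n) (le : rel 'I_n) :
  is_scheme r -> quasi_thin r -> total_order le ->
  is_basis_of_terwilliger r x (Bfamily r F le x).
Proof.
(* The order only selects one of the two pairings of xR_i with xR_j as B_ij; since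
   every xR_j is enumerated once and for all, any enumeration works. *)
move=> r_scheme r_qthin _; split.
- move=> M /Bfamily_memP B_M V V1 VA VE Vmul.
  have V_closed : terwilliger_closed r x V by split.
  case: B_M => [[i [j [Uij ->]]] | [a [b ->]]]; first exact: Bmx_closed.
  exact: EJE_closed.
- exact: free_Bfamily.
- move=> M T_M; have [V1 VA VE Vmul] := span_Bfamily_closed r_scheme r_qthin F x le.
  exact: T_M.
Qed.
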